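(* Let $(V,L,\varphi,E)$ be a valuation system. Suppose there exist a sublattice $C$ of $V$ and a valuation $\psi:C\to E$ such that $\psi$ extends $\varphi$ and $(V,C,\psi,E)$ is complete. Then there is a sublattice $\overline L$ of $V$ and a valuation $\overline\varphi:\overline L\to E$ such that $\overline\varphi$ extends $\varphi$, $(V,\overline L,\overline\varphi,E)$ is complete, and $\psi'$ extends $\overline\varphi$ for every sublattice $C'$ of $V$ and every valuation $\psi':C'\to E$ that extends $\varphi$ and for which $(V,C',\psi',E)$ is complete. Moreover, $\varphi$ is $\Pi_\xi$-extendible and $\overline\varphi=\Pi_\xi\varphi$ for some ordinal number $\xi$.
   Context: A valuation system $(V,L,\varphi,E)$ consists of: (i) a lattice $V$ which is $\sigma$-distributive, i.e. for every $a\in V$ and every sequence $(b_n)$ in $V$ whose infimum exists, $\bigwedge_n(a\vee b_n)$ exists and equals $a\vee\bigwedge_n b_n$, and dually whenever $\bigvee_n b_n$ exists, $\bigvee_n(a\wedge b_n)$ exists and equals $a\wedge\bigvee_n b_n$; (ii) a sublattice $L$ of $V$; (iii) a partially ordered abelian group $E$ which is R-complete: whenever $x_1\ge x_2\ge\cdots$ and $y_1\ge y_2\ge\cdots$ in $E$ are such that $\bigwedge_n(x_n+y_n)$ exists, then $\bigwedge_n x_n$ and $\bigwedge_n y_n$ exist, and dually for increasing sequences and suprema; (iv) a valuation $\varphi:L\to E$, i.e. an order-preserving map with $\varphi(a\wedge b)+\varphi(a\vee b)=\varphi(a)+\varphi(b)$. A map $\psi:C\to E$ extends $\varphi:L\to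 E$ if $L\subseteq C$ and $\psi|_L=\varphi$. A decreasing sequence $(a_n)$ in $L$ is $\varphi$-convergent if $\bigwedge_n a_n$ exists in $V$ and $\bigwedge_n\varphi(a_n)$ exists in $E$; an increasing sequence $(a_n)$ is $\varphi$-convergent if $\bigvee_n a_n$ exists in $V$ and $\bigvee_n\varphi(a_n)$ exists in $E$. The system is $\Pi$-complete if for every $\varphi$-convergent decreasing $(a_n)$ in $L$, $\bigwedge_n a_n\in L$ and $\varphi(\bigwedge_n a_n)=\bigwedge_n\varphi(a_n)$; $\Sigma$-complete dually with increasing sequences and suprema; complete if both. $\Pi L:=\{\bigwedge_n a_n:(a_n)\ \varphi\text{-convergent decreasing in }L\}$, and $\varphi$ is $\Pi$-extendible if there is a valuation $\Pi\varphi:\Pi L\to E$ with $\Pi\varphi(\bigwedge_n a_n)=\bigwedge_n\varphi(a_n)$ for all such sequences; $\Sigma L$, $\Sigma$-extendible and $\Sigma\varphi$ are defined dually. The hierarchy is defined by transfinite recursion: $\varphi$ is $\Pi_0$- and $\Sigma_0$-extendible with $\Pi_0\varphi=\Sigma_0\varphi=\varphi$ (on $\Pi_0L=\Sigma_0L=L$); $\varphi$ is $\Pi_{\alpha+1}$-extendible iff $\varphi$ is $\Sigma_\alpha$-extendible and $\Sigma_\alpha\varphi$ is $\Pi$-extendible, and then $\Pi_{\alpha+1}L=\Pi(\Sigma_\alpha L)$, $\Pi_{\alpha+1}\varphi=\Pi(\Sigma_\alpha\varphi)$; $\varphi$ is $\Sigma_{\alpha+1}$-extendible iff $\varphi$ is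 $\Pi_\alpha$-extendible and $\Pi_\alpha\varphi$ is $\Sigma$-extendible, and then $\Sigma_{\alpha+1}L=\Sigma(\Pi_\alpha L)$, $\Sigma_{\alpha+1}\varphi=\Sigma(\Pi_\alpha\varphi)$; for a limit ordinal $\lambda$, $\varphi$ is $\Pi_\lambda$-extendible iff it is $\Pi_\alpha$-extendible for all $\alpha<\lambda$, and then $\Pi_\lambda L=\bigcup_{\alpha<\lambda}\Pi_\alpha L$ and $\Pi_\lambda\varphi(c)=\Pi_\beta\varphi(c)$ for $c\in\Pi_\beta L$, $\beta<\lambda$; similarly for $\Sigma_\lambda$. *)

From HB Require Import structures.
From mathcomp Require Import all_boot all_order all_algebra.
Set Implicit Arguments. Unset Strict Implicit. Unset Printing Implicit Defensive.
Import Order.TTheory GRing.Theory Num.Theory.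

(* Subsets of a type are predicates [T -> Prop]; a partial map [C -> E] on a
   subset [C] of [V] is represented by a total map [V -> E] of which only the
   values on [C] matter. *)

Section Orders.
Context {disp : Order.disp_t} {T : porderType disp}.
Local Open Scope order_scope.

Definition is_inf (a : nat -> T) (x : T) : Prop :=
  (forall n, x <= a n) /\ (forall y, (forall n, y <= a n) -> y <= x).
Definition is_sup (a : nat -> T) (x : T) : Prop :=
  (forall n, a n <= x) /\ (forall y, (forall n, a n <= y) -> x <= y).
Definition has_inf (a : nat -> T) : Prop := exists x, is_inf a x.
Definition has_sup (a : nat -> T) : Prop := exists x, is_sup a x.
Definition decreasing (a : nat -> T) : Prop := forall n, a n.+1 <= a n.
Definition increasing (a : nat -> T) : Prop := forall n, a n <= a n.+1.
End Orders.

Section Lattices.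
Context {disp : Order.disp_t} {V : latticeType disp}.
Local Open Scope order_scope.

Definition sigma_distributive : Prop :=
  (forall (a : V) (b : nat -> V) (x : V), is_inf b x ->
      is_inf (fun n => a `|` b n) (a `|` x)) /\
  (forall (a : V) (b : nat -> V) (x : V), is_sup b x ->
      is_sup (fun n => a `&` b n) (a `&` x)).

Definition sublattice (L : V -> Prop) : Prop :=
  forall a b, L a -> L b -> L (a `&` b) /\ L (a `|` b).
End Lattices.

Section Groups.
Context {E : porderZmodType}.
Local Open Scope ring_scope.

Definition po_group : Prop := forall x y z : E, x <= y -> x + z <= y + z.

Definition R_complete : Prop :=
  (forall x y : nat -> E, decreasing x -> decreasing y ->
      has_inf (fun n => x n + y n) -> has_inf x /\ has_inf y) /\
  (forall x y : nat -> E, increasing x -> increasing y ->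
      has_sup (fun n => x n + y n) -> has_sup x /\ has_sup y).
End Groups.

Section Valuations.
Context {disp : Order.disp_t} {V : latticeType disp} {E : porderZmodType}.

Definition valuation (L : V -> Prop) (phi : V -> E) : Prop :=
  (forall a b, L a -> L b -> (a <= b)%O -> (phi a <= phi b)%R) /\
  (forall a b, L a -> L b ->
     (phi (a `&` b)%O + phi (a `|` b)%O = phi a + phi b)%R).

Definition extends (L : V -> Prop) (phi : V -> E) (C : V -> Prop) (psi : V -> E)
  : Prop := (forall a, L a -> C a) /\ (forall a, L a -> psi a = phi a).

Definition conv_dec (L : V -> Prop) (phi : V -> E) (a : nat -> V) : Prop :=
  (forall n, L (a n)) /\ decreasing a /\ has_inf a /\ has_inf (fun n => phi (a n)).
Definition conv_inc (L : V -> Prop) (phi : V -> E) (a : nat -> V) : Prop :=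
  (forall n, L (a n)) /\ increasing a /\ has_sup a /\ has_sup (fun n => phi (a n)).

Definition Pi_complete (L : V -> Prop) (phi : V -> E) : Prop :=
  forall a x e, conv_dec L phi a -> is_inf a x -> is_inf (fun n => phi (a n)) e ->
    L x /\ phi x = e.
Definition Sigma_complete (L : V -> Prop) (phi : V -> E) : Prop :=
  forall a x e, conv_inc L phi a -> is_sup a x -> is_sup (fun n => phi (a n)) e ->
    L x /\ phi x = e.
Definition complete (L : V -> Prop) (phi : V -> E) : Prop :=
  Pi_complete L phi /\ Sigma_complete L phi.

Definition PiL (L : V -> Prop) (phi : V -> E) : V -> Prop :=
  fun x => exists a, conv_dec L phi a /\ is_inf a x.
Definition SigmaL (L : V -> Prop) (phi : V -> E) : V -> Prop :=
  fun x => exists a, conv_inc L phi a /\ is_sup a x.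

(* [PiExt L phi D f] : phi is Pi-extendible, with Pi L = D and
   Pi phi = f (on D). *)
Definition PiExt (L : V -> Prop) (phi : V -> E) (D : V -> Prop) (f : V -> E)
  : Prop :=
  (forall x, D x <-> PiL L phi x) /\ sublattice D /\ valuation D f /\
  (forall a x e, conv_dec L phi a -> is_inf a x ->
     is_inf (fun n => phi (a n)) e -> f x = e).
Definition SigmaExt (L : V -> Prop) (phi : V -> E) (D : V -> Prop) (f : V -> E)
  : Prop :=
  (forall x, D x <-> SigmaL L phi x) /\ sublattice D /\ valuation D f /\
  (forall a x e, conv_inc L phi a -> is_sup a x ->
     is_sup (fun n => phi (a n)) e -> f x = e).

Definition Ext (b : bool) := if b then PiExt else SigmaExt.

(* Ordinals are represented as elements of a well-ordered type (W, lt). *)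
Definition well_order {W : Type} (lt : W -> W -> Prop) : Prop :=
  well_founded lt /\ (forall x y z, lt x y -> lt y z -> lt x z) /\
  (forall x y, lt x y \/ x = y \/ lt y x).

Definition is_zero {W : Type} (lt : W -> W -> Prop) (al : W) : Prop :=
  forall be, ~ lt be al.
Definition is_succ_of {W : Type} (lt : W -> W -> Prop) (al be : W) : Prop :=
  lt be al /\ forall ga, ~ (lt be ga /\ lt ga al).
Definition is_limit {W : Type} (lt : W -> W -> Prop) (al : W) : Prop :=
  ~ is_zero lt al /\ forall be, ~ is_succ_of lt al be.

(* [Hier lt L phi b al D f] : phi is Pi_al-extendible (b = true) resp.
   Sigma_al-extendible (b = false), with Pi_al L = D (resp. Sigma_al L = D)
   and Pi_al phi = f (resp. Sigma_al phi = f) on D. *)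
Inductive Hier {W : Type} (lt : W -> W -> Prop) (L : V -> Prop) (phi : V -> E)
  : bool -> W -> (V -> Prop) -> (V -> E) -> Prop :=
| Hier_zero : forall b al, is_zero lt al -> Hier lt L phi b al L phi
| Hier_succ : forall b al be D f D' f',
    is_succ_of lt al be -> Hier lt L phi (~~ b) be D f ->
    Ext b D f D' f' -> Hier lt L phi b al D' f'
| Hier_limit : forall b al (Dfam : W -> V -> Prop) (ffam : W -> V -> E)
      (D : V -> Prop) (f : V -> E),
    is_limit lt al ->
    (forall be, lt be al -> Hier lt L phi b be (Dfam be) (ffam be)) ->
    (forall x, D x <-> exists2 be, lt be al & Dfam be x) ->
    (forall be x, lt be al -> Dfam be x -> f x = ffam be x) ->
    Hier lt L phi b al D f.

End Valuations.

(* Inside the given complete extension (C, psi) define by transfinite recursion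
     stage true  α = L ∪ ⋃_{β<α} Π(stage false β),
     stage false α = L ∪ ⋃_{β<α} Σ(stage true β),
   everything valued by psi.  Completeness of C keeps the stages inside C, with
   psi giving the value of every Π- or Σ-limit; sigma-distributivity and
   R-completeness make Π and Σ of a sublattice again a sublattice; and the
   stages realise the hierarchy Π_α L, Σ_α L.  By induction, every complete
   extension of phi contains every stage, with the same values.  Indexed by a
   well-order that does not inject into [bool -> V -> Prop] (Cantor), the
   stages must stall, stage b v = stage b u for some u < v; then stage true u
   is closed under both Π and Σ, hence complete. *)

From HB Require Import structures.
From mathcomp Require Import all_boot all_order all_algebra.
From mathcomp Require Import boolp.
From mathcomp Require wochoice.
From Stdlib Require Import Classical.
Import Order.LTheory GRing.Theory.

Set Implicit Arguments.
Unset Strict Implicit.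
Unset Printing Implicit Defensive.

Local Open Scope order_scope.

Section Sequences.
Context {disp : Order.disp_t} {T : porderType disp}.

Lemma increasing_le (a : nat -> T) :
  increasing a -> {homo a : m n / (m <= n)%N >-> m <= n}.
Proof. by move=> ia; apply: homo_leq => // y x z; exact: le_trans. Qed.

Lemma is_sup_cst (x : T) : is_sup (fun=> x) x.
Proof. by split=> [//|y /(_ 0%N)]. Qed.

End Sequences.

Section MonotoneLimits.
Context {disp : Order.disp_t} {T : porderType disp}.

Lemma decreasing_ge (a : nat -> T) :
  decreasing a -> {homo a : m n / (m <= n)%N >-> n <= m}.
Proof. exact: @increasing_le _ T^d a. Qed.

Lemma is_inf_cst (x : T) : is_inf (fun=> x) x.
Proof. exact: @is_sup_cst _ T^d x. Qed.

Definition monotone (b : bool) (a : nat -> T) : Prop :=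
  if b then decreasing a else increasing a.
Definition is_lim (b : bool) (a : nat -> T) (x : T) : Prop :=
  if b then is_inf a x else is_sup a x.

Lemma monotone_cst b (x : T) : monotone b (fun=> x).
Proof. by case: b. Qed.

Lemma is_lim_cst b (x : T) : is_lim b (fun=> x) x.
Proof. by case: b; [exact: is_inf_cst | exact: is_sup_cst]. Qed.

End MonotoneLimits.

Section OrderedGroup.
Context {E : porderZmodType}.
Hypothesis PG : po_group (E := E).
Local Open Scope ring_scope.

Lemma po_lerD (a b c d : E) : a <= b -> c <= d -> a + c <= b + d.
Proof.
move=> ab cd; apply: le_trans (PG c ab) _.
by rewrite ![b + _]addrC; apply: PG.
Qed.

Lemma po_lerBlDr (a b c : E) : (a - c <= b) <-> (a <= b + c).
Proof.
split=> h; first by have := PG c h; rewrite subrK.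
by have := PG (- c) h; rewrite addrK.
Qed.

Lemma po_lerBrDr (a b c : E) : (a <= b - c) <-> (a + c <= b).
Proof.
split=> h; first by have := PG c h; rewrite subrK.
by have := PG (- c) h; rewrite addrK.
Qed.

Lemma inf_add (x y : nat -> E) ex ey : decreasing x -> decreasing y ->
  is_inf x ex -> is_inf y ey -> is_inf (fun n => x n + y n) (ex + ey).
Proof.
move=> dx dy [lx gx] [ly gy]; split=> [n|z hz]; first exact: po_lerD.
have le_ey m : z - x m <= ey.
  apply: gy => n; apply/po_lerBlDr; apply: le_trans (hz (maxn m n)) _.
  by rewrite [y n + _]addrC; apply: po_lerD; apply: decreasing_ge;
    rewrite ?leq_maxl ?leq_maxr.
apply/po_lerBlDr; apply: gx => m.
by apply/po_lerBlDr; rewrite addrC; apply/po_lerBlDr.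
Qed.

Lemma sup_add (x y : nat -> E) ex ey : increasing x -> increasing y ->
  is_sup x ex -> is_sup y ey -> is_sup (fun n => x n + y n) (ex + ey).
Proof.
move=> ix iy [ux gx] [uy gy]; split=> [n|z hz]; first exact: po_lerD.
have ey_le m : ey <= z - x m.
  apply: gy => n; apply/po_lerBrDr; apply: le_trans _ (hz (maxn m n)).
  by rewrite [y n + _]addrC; apply: po_lerD; apply: increasing_le;
    rewrite ?leq_maxl ?leq_maxr.
apply/po_lerBrDr; apply: gx => m.
by apply/po_lerBrDr; rewrite addrC; apply/po_lerBrDr.
Qed.

Lemma is_lim_add b (x y : nat -> E) ex ey : monotone b x -> monotone b y ->
  is_lim b x ex -> is_lim b y ey -> is_lim b (fun n => x n + y n) (ex + ey).
Proof. by case: b; [exact: inf_add | exact: sup_add]. Qed.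

End OrderedGroup.

Lemma R_complete_lim {E : porderZmodType} b (x y : nat -> E) :
  R_complete (E := E) -> monotone b x -> monotone b y ->
  (exists e, is_lim b (fun n => (x n + y n)%R) e) ->
  (exists e, is_lim b x e) /\ (exists e, is_lim b y e).
Proof. by case: b => -[RCi RCs]; [exact: RCi | exact: RCs]. Qed.

Section Lattice.
Context {disp : Order.disp_t} {V : latticeType disp}.

Lemma sup_join (a c : nat -> V) x y : is_sup a x -> is_sup c y ->
  is_sup (fun n => a n `|` c n) (x `|` y).
Proof.
move=> [ua ga] [uc gc]; split=> [n|z hz]; first exact: leU2.
by rewrite leUx ga ?gc // => n; have := hz n; rewrite leUx => /andP[].
Qed.

Lemma sup_meet (SD : sigma_distributive (V := V)) (a c : nat -> V) x y :
  increasing a -> increasing c -> is_sup a x -> is_sup c y ->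
  is_sup (fun n => a n `&` c n) (x `&` y).
Proof.
move=> ia ic ha hc; split=> [n|z hz].
  by apply: leI2; [case: ha | case: hc].
have le_z n m : a n `&` c m <= z.
  apply: le_trans (hz (maxn n m)).
  by apply: leI2; apply: increasing_le; rewrite ?leq_maxl ?leq_maxr.
have le_z' n : a n `&` y <= z by apply: (SD.2 (a n) c y hc).2 => m; exact: le_z.
by rewrite meetC; apply: (SD.2 y a x ha).2 => n; rewrite meetC; exact: le_z'.
Qed.

Lemma sigma_distributive_dual :
  sigma_distributive (V := V) -> sigma_distributive (V := V^d).
Proof. by move=> [SDi SDs]; split; [exact: SDs | exact: SDi]. Qed.

Lemma sublattice_chain_union (I : Type) (R : I -> I -> Prop) (P : I -> Prop)
    (F : I -> V -> Prop) :
  (forall i j, R i j \/ i = j \/ R j i) ->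
  (forall i j x, R i j -> F i x -> F j x) ->
  (forall i, P i -> sublattice (F i)) ->
  sublattice (fun x => exists2 i, P i & F i x).
Proof.
move=> R_total F_mono F_sub x y [i Pi Fix] [j Pj Fjy].
have [k [Pk [Fkx Fky]]] : exists k, P k /\ F k x /\ F k y.
  have [ij|[ij|ji]] := R_total i j.
  - by exists j; split=> //; split=> //; apply: F_mono ij Fix.
  - by subst j; exists i.
  - by exists i; split=> //; split=> //; apply: F_mono ji Fjy.
by have [Fm Fj] := F_sub k Pk x y Fkx Fky; split; exists k.
Qed.

End Lattice.

Section LatticeLimits.
Context {disp : Order.disp_t} {V : latticeType disp}.
Hypothesis SD : sigma_distributive (V := V).

Lemma inf_meet (a c : nat -> V) x y : is_inf a x -> is_inf c y ->
  is_inf (fun n => a n `&` c n) (x `&` y).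
Proof. exact: (@sup_join _ V^d a c x y). Qed.

Lemma inf_join (a c : nat -> V) x y :
  decreasing a -> decreasing c -> is_inf a x -> is_inf c y ->
  is_inf (fun n => a n `|` c n) (x `|` y).
Proof. exact: (@sup_meet _ V^d (sigma_distributive_dual SD) a c x y). Qed.

Lemma monotone_meet b (a c : nat -> V) :
  monotone b a -> monotone b c -> monotone b (fun n => a n `&` c n).
Proof. by case: b => ma mc n; apply: leI2. Qed.

Lemma monotone_join b (a c : nat -> V) :
  monotone b a -> monotone b c -> monotone b (fun n => a n `|` c n).
Proof. by case: b => ma mc n; apply: leU2. Qed.

Lemma is_lim_meet b (a c : nat -> V) x y : monotone b a -> monotone b c ->
  is_lim b a x -> is_lim b c y -> is_lim b (fun n => a n `&` c n) (x `&` y).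
Proof. by case: b => ma mc; [exact: inf_meet | exact: sup_meet]. Qed.

Lemma is_lim_join b (a c : nat -> V) x y : monotone b a -> monotone b c ->
  is_lim b a x -> is_lim b c y -> is_lim b (fun n => a n `|` c n) (x `|` y).
Proof. by case: b => ma mc; [exact: inf_join | exact: sup_join]. Qed.

End LatticeLimits.

Section LimitSets.
Context {disp : Order.disp_t} {V : latticeType disp} {E : porderZmodType}.
Implicit Types (S C : V -> Prop) (g psi : V -> E) (a : nat -> V).

Definition conv b S g a : Prop :=
  (forall n, S (a n)) /\ monotone b a /\ (exists x, is_lim b a x) /\
  (exists e, is_lim b (g \o a) e).

(* [limL true S g] and [limL false S g] unfold to [PiL S g] and [SigmaL S g]. *)
Definition limL b S g : V -> Prop :=
  fun x => exists a, conv b S g a /\ is_lim b a x.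

Lemma ExtP b S g (D : V -> Prop) (f : V -> E) :
  (forall x, D x <-> limL b S g x) -> sublattice D -> valuation D f ->
  (forall a x e,
     conv b S g a -> is_lim b a x -> is_lim b (g \o a) e -> f x = e) ->
  Ext b S g D f.
Proof. by case: b. Qed.

Lemma comp_ext S g psi a : (forall x, S x -> g x = psi x) ->
  (forall n, S (a n)) -> g \o a = psi \o a.
Proof. by move=> g_psi Sa; apply: funext => n; apply: g_psi. Qed.

Lemma conv_ext b S g psi a :
  (forall x, S x -> g x = psi x) -> conv b S g a -> conv b S psi a.
Proof.
move=> g_psi ca; have [Sa _] := ca.
by rewrite /conv -(comp_ext g_psi Sa).
Qed.

Lemma conv_mono b S S' g a :
  (forall x, S x -> S' x) -> conv b S g a -> conv b S' g a.
Proof. by move=> SS' [Sa ca]; split=> // n; apply: SS'. Qed.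

Lemma limL_ext b S g psi x : (forall y, S y -> g y = psi y) ->
  limL b S g x <-> limL b S psi x.
Proof.
move=> g_psi; split=> -[a [ca la]]; exists a; split=> //.
  exact: conv_ext ca.
by apply: conv_ext ca => y /g_psi.
Qed.

Lemma limL_mono b S S' g x :
  (forall y, S y -> S' y) -> limL b S g x -> limL b S' g x.
Proof.
by move=> SS' [a [ca la]]; exists a; split=> //; exact: conv_mono ca.
Qed.

Lemma sub_limL b S g x : S x -> limL b S g x.
Proof.
move=> Sx; exists (fun=> x); split; last exact: is_lim_cst.
split=> //; split; first exact: monotone_cst.
by split; [exists x | exists (g x)]; exact: is_lim_cst.
Qed.

Lemma valuation_sub S S' g :
  (forall x, S x -> S' x) -> valuation S' g -> valuation S g.
Proof.
by move=> SS' [g_mono g_mod]; split=> x y Sx Sy;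
  [apply: g_mono | apply: g_mod]; apply: SS'.
Qed.

Lemma valuation_monotone b S g a : valuation S g ->
  (forall n, S (a n)) -> monotone b a -> monotone b (g \o a).
Proof. by move=> [g_mono _] Sa; case: b => ma n; apply: g_mono. Qed.

Lemma limL_sublattice b S g :
  sigma_distributive (V := V) -> po_group (E := E) -> R_complete (E := E) ->
  sublattice S -> valuation S g -> sublattice (limL b S g).
Proof.
move=> SD PG RC S_sub g_val x y [a [[Sa [ma [_ [ea lea]]]] la]]
  [c [[Sc [mc [_ [ec lec]]]] lc]].
pose m n := a n `&` c n; pose j n := a n `|` c n.
have Sm n : S (m n) by case: (S_sub _ _ (Sa n) (Sc n)).
have Sj n : S (j n) by case: (S_sub _ _ (Sa n) (Sc n)).
have mm : monotone b m by apply: monotone_meet.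
have mj : monotone b j by apply: monotone_join.
have gm := valuation_monotone g_val Sm mm.
have gj := valuation_monotone g_val Sj mj.
(* [g (m n) + g (j n)] equals [g (a n) + g (c n)], which converges, so
   R-completeness yields limits of both summands. *)
have [[em lem] [ej lej]] :
    (exists e, is_lim b (g \o m) e) /\ (exists e, is_lim b (g \o j) e).
  apply: R_complete_lim gm gj _ => //; exists (ea + ec)%R.
  have -> : (fun n => g (m n) + g (j n))%R = (fun n => g (a n) + g (c n))%R.
    by apply: funext => n; apply: g_val.2.
  exact: (is_lim_add PG (valuation_monotone g_val Sa ma)
    (valuation_monotone g_val Sc mc) lea lec).
split.
- exists m; split; last exact: is_lim_meet.
  by do !split=> //; [exists (x `&` y); apply: is_lim_meet | exists em].
- exists j; split; last exact: is_lim_join.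
  by do !split=> //; [exists (x `|` y); apply: is_lim_join | exists ej].
Qed.

Lemma complete_conv C psi S g b a x e : complete C psi ->
  (forall y, S y -> C y) -> (forall y, S y -> g y = psi y) ->
  conv b S g a -> is_lim b a x -> is_lim b (g \o a) e -> C x /\ psi x = e.
Proof.
move=> [C_Pi C_Sigma] SC g_psi ca la; have [Sa _] := ca.
rewrite (comp_ext g_psi Sa); move: (conv_mono SC (conv_ext g_psi ca)) la.
by case: b {ca}; [apply: C_Pi | apply: C_Sigma].
Qed.

Lemma complete_of_closed C psi S : complete C psi -> (forall x, S x -> C x) ->
  (forall b x, limL b S psi x -> S x) -> complete S psi.
Proof.
move=> C_complete SC S_closed.
have psi_lim b a x e :
    conv b S psi a -> is_lim b a x -> is_lim b (psi \o a) e -> psi x = e.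
  by move=> ca la le; apply: (complete_conv C_complete SC _ ca la le).2.
split=> a x e ca la le; split.
- by apply: (S_closed true); exists a.
- exact: (psi_lim true a).
- by apply: (S_closed false); exists a.
- exact: (psi_lim false a).
Qed.

End LimitSets.

Section Stages.
Context {disp : Order.disp_t} {V : latticeType disp} {E : porderZmodType}.
Variables (C : V -> Prop) (psi : V -> E).
Hypotheses (SD : sigma_distributive (V := V)) (PG : po_group (E := E))
  (RC : R_complete (E := E)) (psi_val : valuation C psi)
  (C_complete : complete C psi).
Variables (W : Type) (lt : W -> W -> Prop).
Hypothesis lt_wo : well_order lt.
Variables (L : V -> Prop) (phi : V -> E).
Hypotheses (L_sub : sublattice L) (psi_ext : extends L phi C psi).

(* Putting [L] into every stage makes stage zero equal to [L] and changes
   nothing at later stages, since [L] lies in every [limL b S psi] with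
   [L] included in [S]. *)
Definition stage_step (al : W) (rec : forall be, lt be al -> bool -> V -> Prop)
    (b : bool) (x : V) : Prop :=
  L x \/ exists be (h : lt be al), limL b (rec be h (~~ b)) psi x.

Definition stage (b : bool) (al : W) : V -> Prop :=
  Fix lt_wo.1 (fun=> bool -> V -> Prop) stage_step al b.

Lemma stageE b al x :
  stage b al x <-> L x \/ exists2 be, lt be al & limL b (stage (~~ b) be) psi x.
Proof.
rewrite /stage Fix_eq => [|al' f g fg]; last first.
  by congr stage_step; apply: functional_extensionality_dep => be;
    exact: funext.
split=> [[Lx|[be [be_al x_lim]]]|[Lx|[be be_al x_lim]]]; try by left.
  by right; exists be.
by right; exists be, be_al.
Qed.

Lemma stage_L b al x : L x -> stage b al x.
Proof. by move=> Lx; apply/stageE; left. Qed.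

Lemma stage_limL b be al x :
  lt be al -> limL b (stage (~~ b) be) psi x -> stage b al x.
Proof. by move=> be_al x_lim; apply/stageE; right; exists be. Qed.

Lemma stage_mono b ga al x : lt ga al -> stage b ga x -> stage b al x.
Proof.
move=> ga_al /stageE[Lx|[be be_ga x_lim]]; first exact: stage_L.
exact: stage_limL (lt_wo.2.1 _ _ _ be_ga ga_al) x_lim.
Qed.

Lemma stage_sub_C b al x : stage b al x -> C x.
Proof.
elim/(well_founded_ind lt_wo.1): al b x => al IH b x.
case/stageE=> [Lx|[be be_al [a [ca la]]]]; first exact: psi_ext.1.
have [e le] := ca.2.2.2.
exact: (complete_conv C_complete (IH be be_al (~~ b)) (fun _ _ => erefl)
  ca la le).1.
Qed.

Lemma stage_valuation b al : valuation (stage b al) psi.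
Proof. exact: valuation_sub (@stage_sub_C b al) psi_val. Qed.

Lemma stage_zero b al : is_zero lt al -> stage b al = L.
Proof.
move=> al0; apply/predeqP => x; split=> [|/stage_L //].
by case/stageE=> [//|[be be_al _]]; case: (al0 be).
Qed.

Lemma stage_nonzero b al : ~ is_zero lt al ->
  stage b al = fun x => exists2 be, lt be al & limL b (stage (~~ b) be) psi x.
Proof.
move=> al_gt0; apply/predeqP => x; split; last by case=> be; apply: stage_limL.
case/stageE=> [Lx|//].
have [be be_al] : exists be, lt be al.
  by apply: NNPP => no_be; apply: al_gt0 => be be_al; apply: no_be; exists be.
by exists be => //; apply: sub_limL; apply: stage_L.
Qed.

Lemma stage_succ b al be : is_succ_of lt al be ->
  stage b al = limL b (stage (~~ b) be) psi.
Proof.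
move=> [be_al no_between]; have al_gt0 : ~ is_zero lt al by move/(_ be).
rewrite stage_nonzero //; apply/predeqP => x.
split=> [[ga ga_al]|]; last by exists be.
have [ga_be|[-> //|be_ga]] := lt_wo.2.2 ga be; last by case: (no_between ga).
by apply: limL_mono => y; apply: stage_mono.
Qed.

Lemma stage_limit b al : is_limit lt al ->
  stage b al = fun x => exists2 be, lt be al & stage b be x.
Proof.
move=> [al_gt0 not_succ]; rewrite stage_nonzero //; apply/predeqP => x; split.
  move=> [be be_al x_lim].
  have [ga [be_ga ga_al]] : exists ga, lt be ga /\ lt ga al.
    apply: NNPP => none; apply: (not_succ be); split=> // ga between.
    by apply: none; exists ga.
  by exists ga; last exact: stage_limL x_lim.
move=> [be be_al /stageE[Lx|[ga ga_be x_lim]]].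
  by exists be => //; apply/sub_limL/stage_L.
by exists ga => //; apply: lt_wo.2.1 ga_be be_al.
Qed.

Lemma stage_sublattice b al : sublattice (stage b al).
Proof.
elim/(well_founded_ind lt_wo.1): al b => al IH b.
have [al0|al_gt0] := classic (is_zero lt al); first by rewrite stage_zero.
rewrite stage_nonzero //; apply: (sublattice_chain_union lt_wo.2.2).
  by move=> be ga x be_ga; apply: limL_mono => y; apply: stage_mono.
move=> be be_al; apply: limL_sublattice => //; first exact: IH.
exact: stage_valuation.
Qed.

(* [Hier_zero] fixes the valuation of stage zero to be [phi] itself. *)
Definition stage_phi (al : W) : V -> E :=
  if `[< is_zero lt al >] then phi else psi.

Lemma stage_phiE b al x : stage b al x -> stage_phi al x = psi x.
Proof.
rewrite /stage_phi; case: asboolP => [al0|//].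
by rewrite stage_zero // => Lx; rewrite psi_ext.2.
Qed.

Lemma Hier_stage b al : Hier lt L phi b al (stage b al) (stage_phi al).
Proof.
elim/(well_founded_ind lt_wo.1): al b => al IH b.
have [al0|al_gt0] := classic (is_zero lt al).
  by rewrite stage_zero // /stage_phi asboolT //; apply: Hier_zero.
have -> : stage_phi al = psi by rewrite /stage_phi asboolF.
have [[be al_be]|not_succ] := classic (exists be, is_succ_of lt al be).
  apply: (Hier_succ al_be (IH be al_be.1 (~~ b))); apply: ExtP.
  - move=> x; rewrite (stage_succ _ al_be).
    by apply: limL_ext => y /stage_phiE ->.
  - exact: stage_sublattice.
  - exact: stage_valuation.
  - move=> a x e ca la le.
    exact: (complete_conv C_complete (@stage_sub_C _ be) (@stage_phiE _ be)
      ca la le).2.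
have al_lim : is_limit lt al by split=> // be al_be; apply: not_succ; exists be.
apply: (@Hier_limit _ _ _ _ _ _ _ b al (fun be => stage b be) stage_phi) => //.
- by move=> be be_al; apply: IH.
- by move=> x; rewrite (stage_limit b al_lim).
- by move=> be x _ /stage_phiE.
Qed.

Lemma stage_minimal C' psi' : extends L phi C' psi' -> complete C' psi' ->
  forall b al x, stage b al x -> C' x /\ psi' x = psi x.
Proof.
move=> [L_C' psi'_ext] C'_complete b al.
elim/(well_founded_ind lt_wo.1): al b => al IH b x.
case/stageE=> [Lx|[be be_al [a [ca la]]]].
  by split; [apply: L_C' | rewrite psi'_ext // psi_ext.2].
have [e le] := ca.2.2.2.
have [_ ->] :=
  complete_conv C_complete (@stage_sub_C _ be) (fun _ _ => erefl) ca la le.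
apply: (complete_conv C'_complete _ _ ca la le) => y /(IH be be_al (~~ b)).
  by case.
by case=> _ ->.
Qed.

Lemma stage_stall_complete u v : lt u v ->
  (forall b x, stage b v x -> stage b u x) -> complete (stage true u) psi.
Proof.
move=> uv stall; apply: complete_of_closed C_complete (@stage_sub_C _ u) _.
have Sigma_closed x : limL false (stage true u) psi x -> stage false u x.
  by move=> x_lim; apply: stall; apply: stage_limL uv x_lim.
have false_true x : stage false u x -> stage true u x.
  by move=> x_in; apply: stall; apply: (stage_limL uv); apply: sub_limL.
case=> x x_lim; last by apply/false_true/Sigma_closed.
apply: stall; apply: (stage_limL uv); apply: limL_mono x_lim => y y_in.
exact/Sigma_closed/sub_limL.
Qed.

Lemma stage_stalls : (forall j : W -> (bool -> V -> Prop), ~ injective j) ->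
  exists u v, lt u v /\ forall b x, stage b v x -> stage b u x.
Proof.
move=> no_inj; apply: NNPP => no_stall.
apply: (no_inj (fun w b => stage b w)) => u v stages_uv.
have stalls u' v' :
    lt u' v' -> (fun b => stage b u') = (fun b => stage b v') -> False.
  move=> uv' e; apply: no_stall; exists u', v'; split=> // b.
  by have eb : stage b u' = stage b v' := congr1 (@^~ b) e; rewrite eb.
have [uv|[//|vu]] := lt_wo.2.2 u v; first by case: (stalls _ _ uv stages_uv).
by case: (stalls _ _ vu (esym stages_uv)).
Qed.

End Stages.

Section WellOrdering.
Variables (T : eqType) (R : rel T).
Hypothesis R_wo : wochoice.well_order R.

Let R_chain : wochoice.wo_chain R predT.
Proof. by move=> A _; apply: R_wo. Qed.

Lemma wo_total x y : R x y || R y x.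
Proof. exact: wochoice.wo_chainW R_chain x y isT isT. Qed.

Lemma wo_antisym x y : R x y -> R y x -> x = y.
Proof.
move=> xy yx; apply: (wochoice.wo_chain_antisymmetric R_chain) => //.
by rewrite xy.
Qed.

(* The least of [x], [y], [z] either is [x], or forces [x = y] or [y = z]. *)
Lemma wo_trans x y z : R x y -> R y z -> R x z.
Proof.
move=> xy yz; have [|m [[m_in m_min] _]] := R_wo (A := [mem [:: x; y; z]]).
  by exists x; rewrite inE eqxx.
move: m_in m_min; rewrite !inE => /or3P[] /eqP m_eq; subst m => m_min.
- by apply: m_min; rewrite !inE eqxx !orbT.
- by rewrite (wo_antisym xy (m_min x _)) // inE eqxx.
- by rewrite -(wo_antisym yz (m_min y _)) // !inE eqxx orbT.
Qed.

Lemma wo_strict : well_order (fun x y => R x y /\ x <> y).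
Proof.
split; [|split].
- move=> x; apply: NNPP => x_nacc.
  pose A := [pred y | `[< ~ Acc (fun x y => R x y /\ x <> y) y >]].
  have [|m [[/asboolP m_nacc m_min] _]] := R_wo (A := A).
    by exists x; apply/asboolP.
  apply: m_nacc; constructor=> y [ym y_neq_m]; apply: NNPP => y_nacc.
  by apply/y_neq_m/wo_antisym => //; apply: m_min; apply/asboolP.
- move=> x y z [xy x_neq_y] [yz _]; split; first exact: wo_trans xy yz.
  by move=> x_eq_z; subst z; apply/x_neq_y/wo_antisym.
- move=> x y; have [->|x_neq_y] := classic (x = y); first by right; left.
  case/orP: (wo_total x y) => [xy|yx]; first by left.
  by right; right; split=> // y_eq_x; apply: x_neq_y.
Qed.

End WellOrdering.

Lemma exists_well_order (T : Type) : exists lt : T -> T -> Prop, well_order lt.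
Proof.
have [R R_wo] := wochoice.well_ordering_principle {classic T}.
by exists (fun x y => R x y /\ x <> y); exact: (wo_strict R_wo).
Qed.

Lemma Cantor_not_injective (X : Type) (j : (X -> Prop) -> X) : ~ injective j.
Proof.
move=> j_inj; pose D x := exists A, j A = x /\ ~ A x.
have notD : ~ D (j D).
  by move=> DjD; case: (DjD) => A [/j_inj ->]; apply.
by apply: (notD); exists D.
Qed.

Theorem proposition5p8 (d : Order.disp_t) (V : latticeType d)
  (E : porderZmodType) (L : V -> Prop) (phi : V -> E) :
  sigma_distributive (V := V) -> sublattice L ->
  po_group (E := E) -> R_complete (E := E) -> valuation L phi ->
  (exists (C : V -> Prop) (psi : V -> E),
     sublattice C /\ valuation C psi /\ extends L phi C psi /\ complete C psi) ->
  exists (Lbar : V -> Prop) (phibar : V -> E),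
    sublattice Lbar /\ valuation Lbar phibar /\ extends L phi Lbar phibar /\
    complete Lbar phibar /\
    (forall (C' : V -> Prop) (psi' : V -> E),
       sublattice C' -> valuation C' psi' -> extends L phi C' psi' ->
       complete C' psi' -> extends Lbar phibar C' psi') /\
    (exists (W : Type) (lt : W -> W -> Prop) (xi : W) (D : V -> Prop) (f : V -> E),
       well_order lt /\ Hier lt L phi true xi D f /\
       (forall x, Lbar x <-> D x) /\ (forall x, Lbar x -> phibar x = f x)).
Proof.
move=> SD L_sub PG RC _ [C [psi [_ [psi_val [psi_ext C_complete]]]]].
have [lt lt_wo] := exists_well_order ((bool -> V -> Prop) -> Prop).
have [u [v [uv stall]]] := stage_stalls psi lt_wo L (@Cantor_not_injective _).
exists (stage psi lt_wo L true u), psi.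
split; first exact: (stage_sublattice SD PG RC psi_val C_complete L_sub psi_ext
  (b := true) (al := u)).
split; first exact: (stage_valuation psi_val C_complete lt_wo psi_ext true u).
split; first by split=> [x|x Lx]; [apply: stage_L | apply: psi_ext.2].
split; first exact: (stage_stall_complete C_complete psi_ext uv stall).
split.
  move=> C' psi' _ _ ext' C'_complete.
  have min := stage_minimal C_complete psi_ext ext' C'_complete
    (b := true) (al := u).
  by split=> x /min [].
exists _, lt, u, (stage psi lt_wo L true u), (stage_phi psi lt phi u).
split=> //; split.
  exact: (Hier_stage SD PG RC psi_val C_complete lt_wo L_sub psi_ext true u).
by split=> // x x_in; rewrite (stage_phiE psi_ext x_in).
Qed.
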